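(* The set $M = \{z = 0,\ p_z = 0,\ p_\theta = 0\}$ (with $p_\theta = x p_y - y p_x$) is invariant under the Hamiltonian flow of the Kepler–Heisenberg Hamiltonian $H$. Along any solution in $M$ with energy $h$, the function $r(t) = \sqrt{x(t)^2+y(t)^2}$ satisfies that the graph $\{(t, r(t))\}$ lies on a conic in the $(t,r)$-plane which is a hyperbola if $h>0$, an ellipse if $h<0$, and a parabola if $h=0$.
   Context: Phase space is $T^*\mathbb R^3$ with coordinates $(x,y,z,p_x,p_y,p_z)$. Set $P_X = p_x - \tfrac12 y p_z$, $P_Y = p_y + \tfrac12 x p_z$. The Kepler–Heisenberg Hamiltonian is $H = \tfrac12(P_X^2 + P_Y^2) - \frac{1}{8\pi\sqrt{(x^2+y^2)^2+16z^2}}$, defined away from $x=y=z=0$. *)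

From Stdlib Require Import Reals Lra.
From Coquelicot Require Import Coquelicot.
Open Scope R_scope.

Record state := mkState { sx : R; sy : R; sz : R; spx : R; spy : R; spz : R }.

Definition PX (s : state) : R := spx s - / 2 * sy s * spz s.
Definition PY (s : state) : R := spy s + / 2 * sx s * spz s.

(* Kepler--Heisenberg Hamiltonian (meaningful away from x = y = z = 0). *)
Definition KH (s : state) : R :=
  / 2 * (PX s ^ 2 + PY s ^ 2)
  - / (8 * PI * sqrt ((sx s ^ 2 + sy s ^ 2) ^ 2 + 16 * sz s ^ 2)).

Definition away_from_origin (s : state) : Prop :=
  ~ (sx s = 0 /\ sy s = 0 /\ sz s = 0).

Definition dH_dx  (s : state) : R := Derive (fun u => KH (mkState u (sy s) (sz s) (spx s) (spy s) (spz s))) (sx s).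
Definition dH_dy  (s : state) : R := Derive (fun u => KH (mkState (sx s) u (sz s) (spx s) (spy s) (spz s))) (sy s).
Definition dH_dz  (s : state) : R := Derive (fun u => KH (mkState (sx s) (sy s) u (spx s) (spy s) (spz s))) (sz s).
Definition dH_dpx (s : state) : R := Derive (fun u => KH (mkState (sx s) (sy s) (sz s) u (spy s) (spz s))) (spx s).
Definition dH_dpy (s : state) : R := Derive (fun u => KH (mkState (sx s) (sy s) (sz s) (spx s) u (spz s))) (spy s).
Definition dH_dpz (s : state) : R := Derive (fun u => KH (mkState (sx s) (sy s) (sz s) (spx s) (spy s) u)) (spz s).

Definition in_interval (a b : Rbar) (t : R) : Prop := Rbar_lt a t /\ Rbar_lt t b.

Definition is_KH_solution (a b : Rbar) (gamma : R -> state) : Prop :=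
  Rbar_lt a b /\
  forall t, in_interval a b t ->
    away_from_origin (gamma t) /\
    is_derive (fun u => sx (gamma u)) t (dH_dpx (gamma t)) /\
    is_derive (fun u => sy (gamma u)) t (dH_dpy (gamma t)) /\
    is_derive (fun u => sz (gamma u)) t (dH_dpz (gamma t)) /\
    is_derive (fun u => spx (gamma u)) t (- dH_dx (gamma t)) /\
    is_derive (fun u => spy (gamma u)) t (- dH_dy (gamma t)) /\
    is_derive (fun u => spz (gamma u)) t (- dH_dz (gamma t)).

Definition p_theta (s : state) : R := sx s * spy s - sy s * spx s.

Definition in_M (s : state) : Prop := sz s = 0 /\ spz s = 0 /\ p_theta s = 0.

Record conic := mkConic { cA : R; cB : R; cC : R; cD : R; cE : R; cF : R }.

Definition conic_eval (Q : conic) (t r : R) : R :=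
  cA Q * t ^ 2 + cB Q * t * r + cC Q * r ^ 2 + cD Q * t + cE Q * r + cF Q.

(* Determinant of the symmetric 3x3 matrix
   [[A, B/2, D/2], [B/2, C, E/2], [D/2, E/2, F]]; nonzero iff nondegenerate. *)
Definition conic_det (Q : conic) : R :=
  let A := cA Q in let B := cB Q / 2 in let C := cC Q in
  let D := cD Q / 2 in let E := cE Q / 2 in let F := cF Q in
  A * (C * F - E * E) - B * (B * F - E * D) + D * (B * E - C * D).

Definition conic_disc (Q : conic) : R := cB Q ^ 2 - 4 * cA Q * cC Q.

Definition is_hyperbola (Q : conic) : Prop := conic_det Q <> 0 /\ conic_disc Q > 0.
Definition is_parabola  (Q : conic) : Prop := conic_det Q <> 0 /\ conic_disc Q = 0.
(* A real ellipse: nondegenerate, negative discriminant, and nonempty. *)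
Definition is_ellipse   (Q : conic) : Prop :=
  conic_det Q <> 0 /\ conic_disc Q < 0 /\ exists t r, conic_eval Q t r = 0.

From Stdlib Require Import Reals Lra.
From Coquelicot Require Import Coquelicot.
Open Scope R_scope.

(* Hamilton's equations are first made explicit: the partial derivatives of
   H are computed in closed form, with rho = x^2 + y^2 and the coupling
   kappa = 1 / (pi Q^3), Q = sqrt (rho^2 + 16 z^2).
   (1) Invariance of M.  The angular momentum p_theta is a first integral.
   Once p_theta = 0, the "vertical energy" E = z^2 + p_z^2 satisfies
   E' = z p_z (rho/2 - 4 kappa), hence |E'| <= k E with k continuous; a
   Gronwall argument (monotonicity of E e^{-Kt} and of E e^{Kt} on compact
   segments) shows that E vanishes at one time of the interval iff it vanishes
   at all of them.
   (2) Conic.  On M, H = |p|^2/2 - 1/(8 pi rho); the radial momentum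
   J = x p_x + y p_y satisfies J' = 2h and rho' = 2J, so rho is the quadratic
   2h t^2 + 2c t + d, and the Lagrange identity gives c^2 - 2hd = J^2 - 2h rho
   = 1/(4 pi).  Hence r = sqrt rho lies on r^2 = 2h t^2 + 2c t + d, a
   nondegenerate conic with discriminant 8h. *)

(* Differentiates an expression built from functions whose derivatives are
   given by hypotheses is_derive f x l in the context. *)
Ltac derive_from_hypotheses :=
  auto_derive;
  [ repeat split; eexists; eassumption
  | repeat match goal with |- context [Derive ?g ?x] =>
      match goal with H : is_derive _ x ?l |- _ =>
        replace (Derive g x) with l by (symmetry; apply is_derive_unique; exact H)
      end end ].

Lemma is_derive_continuity_pt (f : R -> R) (t l : R) :
  is_derive f t l -> continuity_pt f t.
Proof.
  intros Hf. apply derivable_continuous_pt. exists l. now apply is_derive_Reals.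
Qed.

Lemma mvt_segment (f df : R -> R) (t1 t2 : R) :
  t1 <= t2 -> (forall u, t1 <= u <= t2 -> is_derive f u (df u)) ->
  exists c, t1 <= c <= t2 /\ f t2 - f t1 = df c * (t2 - t1).
Proof.
  intros H12 Hd.
  assert (Hmin : Rmin t1 t2 = t1) by (apply Rmin_left; lra).
  assert (Hmax : Rmax t1 t2 = t2) by (apply Rmax_right; lra).
  destruct (MVT_gen f t1 t2 df) as [c [Hc Hmvt]]; rewrite ?Hmin, ?Hmax in *.
  - intros u Hu. apply Hd. lra.
  - intros u Hu. apply (is_derive_continuity_pt f u (df u)), Hd. lra.
  - now exists c.
Qed.

Lemma derive_nonpos_nonincreasing (f df : R -> R) (t1 t2 : R) :
  t1 <= t2 -> (forall u, t1 <= u <= t2 -> is_derive f u (df u)) ->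
  (forall u, t1 <= u <= t2 -> df u <= 0) -> f t2 <= f t1.
Proof.
  intros H12 Hd Hneg. destruct (mvt_segment f df t1 t2 H12 Hd) as [c [Hc Hmvt]].
  assert (df c * (t2 - t1) <= 0) by (apply Rmult_le_0_r; [apply Hneg, Hc | lra]).
  lra.
Qed.

(* With K = max k, the
   functions E e^{-Kt} and -E e^{Kt} are nonincreasing. *)
Lemma gronwall_vanishing (E dE k : R -> R) (t1 t2 : R) :
  t1 <= t2 ->
  (forall u, t1 <= u <= t2 -> is_derive E u (dE u)) ->
  (forall u, t1 <= u <= t2 -> continuity_pt k u) ->
  (forall u, t1 <= u <= t2 -> 0 <= E u /\ Rabs (dE u) <= k u * E u) ->
  (E t1 = 0 <-> E t2 = 0).
Proof.
  intros H12 Hd Hk Hb.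
  destruct (continuity_ab_maj k t1 t2 H12 Hk) as [m [Hm _]].
  set (K := k m).
  assert (HbK : forall u, t1 <= u <= t2 -> - (K * E u) <= dE u <= K * E u).
  { intros u Hu. destruct (Hb u Hu) as [HE Habs].
    assert (k u * E u <= K * E u) by (apply Rmult_le_compat_r; [lra | apply Hm, Hu]).
    apply Rabs_le_between. lra. }
  split; intros H0.
  - assert (Hdecay : E t2 * exp (- K * t2) <= E t1 * exp (- K * t1)).
    { apply (derive_nonpos_nonincreasing (fun v => E v * exp (- K * v))
               (fun u => (dE u - K * E u) * exp (- K * u))); auto.
      - intros u Hu. assert (HE := Hd u Hu). derive_from_hypotheses. ring.
      - intros u Hu. apply Rmult_le_0_r; [| apply Rlt_le, exp_pos].
        destruct (HbK u Hu). lra. }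
    rewrite H0, Rmult_0_l in Hdecay.
    assert (0 < exp (- K * t2)) by apply exp_pos.
    destruct (Hb t2 ltac:(lra)). nra.
  - assert (Hgrowth : - (E t2 * exp (K * t2)) <= - (E t1 * exp (K * t1))).
    { apply (derive_nonpos_nonincreasing (fun v => - (E v * exp (K * v)))
               (fun u => - ((dE u + K * E u) * exp (K * u)))); auto.
      - intros u Hu. assert (HE := Hd u Hu). derive_from_hypotheses. ring.
      - intros u Hu. rewrite <- Ropp_0.
        apply Ropp_le_contravar, Rmult_le_pos; [| apply Rlt_le, exp_pos].
        destruct (HbK u Hu). lra. }
    rewrite H0, Rmult_0_l in Hgrowth.
    assert (0 < exp (K * t1)) by apply exp_pos.
    destruct (Hb t1 ltac:(lra)). nra.
Qed.

Lemma in_interval_segment (a b : Rbar) (t1 t2 u : R) :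
  in_interval a b t1 -> in_interval a b t2 -> t1 <= u <= t2 -> in_interval a b u.
Proof.
  unfold in_interval; destruct a as [a| |], b as [b| |]; simpl; intros; lra.
Qed.

Lemma in_interval_inhabited (a b : Rbar) : Rbar_lt a b -> exists t, in_interval a b t.
Proof.
  unfold in_interval; destruct a as [a| |], b as [b| |]; simpl; intros Hab; try tauto.
  - exists ((a + b) / 2); simpl; lra.
  - exists (a + 1); simpl; lra.
  - exists (b - 1); simpl; lra.
  - exists 0; simpl; tauto.
Qed.

Lemma derive_zero_constant (a b : Rbar) (f : R -> R) :
  (forall u, in_interval a b u -> is_derive f u 0) ->
  forall t1 t2, in_interval a b t1 -> in_interval a b t2 -> f t2 = f t1.
Proof.
  intros Hd.
  assert (Hle : forall t1 t2, in_interval a b t1 -> in_interval a b t2 -> t1 <= t2 ->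
            f t2 = f t1).
  { intros t1 t2 H1 H2 H12.
    destruct (mvt_segment f (fun _ => 0) t1 t2 H12) as [c [_ Hmvt]]; [| lra].
    intros u Hu. apply Hd, (in_interval_segment a b t1 t2); auto. }
  intros t1 t2 H1 H2. destruct (Rle_dec t1 t2) as [H12 | H21].
  - now apply Hle.
  - symmetry. apply Hle; auto. lra.
Qed.

Lemma derive_affine_quadratic (a b : Rbar) (F : R -> R) (A B t0 : R) :
  in_interval a b t0 ->
  (forall u, in_interval a b u -> is_derive F u (2 * A * u + B)) ->
  forall t, in_interval a b t -> F t = A * t ^ 2 + B * t + (F t0 - A * t0 ^ 2 - B * t0).
Proof.
  intros H0 Hd t Ht.
  enough (Hconst : F t - A * t ^ 2 - B * t = F t0 - A * t0 ^ 2 - B * t0) by lra.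
  apply (derive_zero_constant a b (fun v => F v - A * v ^ 2 - B * v)); auto.
  intros u Hu. assert (HF := Hd u Hu). derive_from_hypotheses. ring.
Qed.

Lemma is_derive_sum_squares (X Y : R -> R) (t dX dY : R) :
  is_derive X t dX -> is_derive Y t dY ->
  is_derive (fun u => X u ^ 2 + Y u ^ 2) t (2 * X t * dX + 2 * Y t * dY).
Proof. intros HX HY. derive_from_hypotheses. ring. Qed.

Lemma is_derive_dot (X Y A B : R -> R) (t dX dY dA dB : R) :
  is_derive X t dX -> is_derive Y t dY -> is_derive A t dA -> is_derive B t dB ->
  is_derive (fun u => X u * A u + Y u * B u) t (dX * A t + X t * dA + dY * B t + Y t * dB).
Proof. intros HX HY HA HB. derive_from_hypotheses. ring. Qed.

Lemma is_derive_cross (X Y A B : R -> R) (t dX dY dA dB : R) :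
  is_derive X t dX -> is_derive Y t dY -> is_derive A t dA -> is_derive B t dB ->
  is_derive (fun u => X u * B u - Y u * A u) t (dX * B t + X t * dB - dY * A t - Y t * dA).
Proof. intros HX HY HA HB. derive_from_hypotheses. ring. Qed.

Lemma is_derive_value (f : R -> R) (t l l' : R) :
  is_derive f t l -> l = l' -> is_derive f t l'.
Proof. now intros Hf <-. Qed.

(* The Hamiltonian vector field.  rho is the squared planar radius, Q^2 the
   quantity under the square root in H, and kappa = 1/(pi Q^3) the coupling
   through which the potential enters Hamilton's equations. *)
Definition rho (s : state) : R := sx s ^ 2 + sy s ^ 2.
Definition kh_denom (s : state) : R := rho s ^ 2 + 16 * sz s ^ 2.
Definition kh_coupling (s : state) : R := / (PI * sqrt (kh_denom s) ^ 3).

Lemma kh_denom_pos (s : state) : away_from_origin s -> 0 < kh_denom s.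
Proof.
  intros Haway. unfold kh_denom, rho.
  assert (Hx := pow2_ge_0 (sx s)). assert (Hy := pow2_ge_0 (sy s)).
  assert (Hz := pow2_ge_0 (sz s)).
  destruct (Rle_lt_or_eq_dec 0 (sz s ^ 2) Hz) as [Hz' | Hz'].
  - assert (0 <= (sx s ^ 2 + sy s ^ 2) ^ 2) by apply pow2_ge_0. lra.
  - destruct (Rle_lt_or_eq_dec 0 (sx s ^ 2 + sy s ^ 2) ltac:(lra)) as [Hr | Hr].
    + assert (0 < (sx s ^ 2 + sy s ^ 2) ^ 2) by (apply pow_lt; lra). lra.
    + exfalso. apply Haway. repeat split; nra.
Qed.

(* Symbolic differentiation of H in one coordinate, at a point where Q > 0. *)
Ltac fold_kh_denom s :=
  repeat match goal with |- context [sqrt ?A] =>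
    match A with kh_denom s => fail 1
    | _ => replace A with (kh_denom s) by (unfold kh_denom, rho; ring) end end.

Ltac partial_derivative s :=
  let Hs := fresh in let Hq := fresh in
  intro Hs; assert (Hq : 0 < sqrt (kh_denom s)) by (apply sqrt_lt_R0, Hs);
  generalize PI_RGT_0; intro;
  apply is_derive_unique; unfold KH, PX, PY; simpl; fold_kh_denom s; auto_derive;
  fold_kh_denom s;
  [ repeat split; try exact Hs; apply Rmult_integral_contrapositive; split; lra
  | unfold rho, kh_coupling; field; split; lra ].

Lemma dH_dx_eq (s : state) : 0 < kh_denom s ->
  dH_dx s = PY s * spz s / 2 + sx s * rho s * kh_coupling s / 4.
Proof. unfold dH_dx. partial_derivative s. Qed.

Lemma dH_dy_eq (s : state) : 0 < kh_denom s ->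
  dH_dy s = - (PX s * spz s / 2) + sy s * rho s * kh_coupling s / 4.
Proof. unfold dH_dy. partial_derivative s. Qed.

Lemma dH_dz_eq (s : state) : 0 < kh_denom s -> dH_dz s = 2 * sz s * kh_coupling s.
Proof. unfold dH_dz. partial_derivative s. Qed.

Lemma dH_dpx_eq (s : state) : 0 < kh_denom s -> dH_dpx s = PX s.
Proof. unfold dH_dpx. partial_derivative s. Qed.

Lemma dH_dpy_eq (s : state) : 0 < kh_denom s -> dH_dpy s = PY s.
Proof. unfold dH_dpy. partial_derivative s. Qed.

Lemma dH_dpz_eq (s : state) : 0 < kh_denom s ->
  dH_dpz s = (sx s * PY s - sy s * PX s) / 2.
Proof. unfold dH_dpz. partial_derivative s. Qed.

(* The factor governing the vertical motion once p_theta = 0. *)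
Definition vertical_rate (s : state) : R := rho s / 2 - 4 * kh_coupling s.

Lemma vertical_rate_derivable (X Y Z : R -> R) (t dX dY dZ : R) :
  is_derive X t dX -> is_derive Y t dY -> is_derive Z t dZ ->
  0 < (X t ^ 2 + Y t ^ 2) ^ 2 + 16 * Z t ^ 2 ->
  ex_derive (fun u => (X u ^ 2 + Y u ^ 2) / 2
               - 4 * / (PI * sqrt ((X u ^ 2 + Y u ^ 2) ^ 2 + 16 * Z u ^ 2) ^ 3)) t.
Proof.
  intros HX HY HZ Hs.
  assert (Hq := sqrt_lt_R0 _ Hs). generalize PI_RGT_0; intro Hpi.
  auto_derive. repeat split; try (eexists; eassumption);
    replace ((X t * (X t * 1) + Y t * (Y t * 1)) * ((X t * (X t * 1) + Y t * (Y t * 1)) * 1)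
             + 16 * (Z t * (Z t * 1))) with ((X t ^ 2 + Y t ^ 2) ^ 2 + 16 * Z t ^ 2) by ring.
  - exact Hs.
  - rewrite !Rmult_1_r. apply Rgt_not_eq, Rmult_lt_0_compat; [exact Hpi |].
    repeat apply Rmult_lt_0_compat; exact Hq.
Qed.

(* E = z^2 + p_z^2 vanishes exactly when z = p_z = 0; it controls z p_z. *)
Definition vertical_energy (s : state) : R := sz s ^ 2 + spz s ^ 2.

Lemma abs_mul_le_sum_squares (z p : R) : Rabs (z * p) <= z ^ 2 + p ^ 2.
Proof. apply Rabs_le. split; nra. Qed.

Section Trajectory.
Variables (a b : Rbar) (gamma : R -> state).
Hypothesis Hsol : is_KH_solution a b gamma.

Lemma hamilton_equations (t : R) : in_interval a b t ->
  let s := gamma t in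
  0 < kh_denom s /\
  is_derive (fun u => sx (gamma u)) t (PX s) /\
  is_derive (fun u => sy (gamma u)) t (PY s) /\
  is_derive (fun u => sz (gamma u)) t ((sx s * PY s - sy s * PX s) / 2) /\
  is_derive (fun u => spx (gamma u)) t
    (- (PY s * spz s / 2 + sx s * rho s * kh_coupling s / 4)) /\
  is_derive (fun u => spy (gamma u)) t
    (- (- (PX s * spz s / 2) + sy s * rho s * kh_coupling s / 4)) /\
  is_derive (fun u => spz (gamma u)) t (- (2 * sz s * kh_coupling s)).
Proof.
  intros Ht s. destruct Hsol as [_ Hham].
  destruct (Hham t Ht) as [Haway [Hx [Hy [Hz [Hpx [Hpy Hpz]]]]]].
  assert (Hs := kh_denom_pos _ Haway).
  rewrite dH_dpx_eq in Hx by exact Hs. rewrite dH_dpy_eq in Hy by exact Hs.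
  rewrite dH_dpz_eq in Hz by exact Hs. rewrite dH_dx_eq in Hpx by exact Hs.
  rewrite dH_dy_eq in Hpy by exact Hs. rewrite dH_dz_eq in Hpz by exact Hs.
  tauto.
Qed.

Lemma p_theta_conserved (t : R) : in_interval a b t ->
  is_derive (fun u => p_theta (gamma u)) t 0.
Proof.
  intros Ht. destruct (hamilton_equations t Ht) as [_ [Hx [Hy [_ [Hpx [Hpy _]]]]]].
  eapply is_derive_value; [exact (is_derive_cross _ _ _ _ t _ _ _ _ Hx Hy Hpx Hpy) |].
  unfold PX, PY. field.
Qed.

Lemma vertical_energy_derive (t : R) : in_interval a b t ->
  is_derive (fun u => vertical_energy (gamma u)) t
    (sz (gamma t) * p_theta (gamma t)
     + sz (gamma t) * spz (gamma t) * vertical_rate (gamma t)).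
Proof.
  intros Ht. destruct (hamilton_equations t Ht) as [_ [_ [_ [Hz [_ [_ Hpz]]]]]].
  eapply is_derive_value; [exact (is_derive_sum_squares _ _ t _ _ Hz Hpz) |].
  unfold p_theta, vertical_rate, PX, PY, rho. field.
Qed.

Lemma vertical_rate_continuous (t : R) : in_interval a b t ->
  continuity_pt (fun u => Rabs (vertical_rate (gamma u))) t.
Proof.
  intros Ht. destruct (hamilton_equations t Ht) as [Hs [Hx [Hy [Hz _]]]].
  destruct (vertical_rate_derivable _ _ _ t _ _ _ Hx Hy Hz Hs) as [l Hl].
  apply (continuity_pt_comp (fun u => vertical_rate (gamma u)) Rabs).
  - exact (is_derive_continuity_pt _ _ _ Hl).
  - apply Rcontinuity_abs.
Qed.

(* Invariance of M: p_theta stays 0, and then Gronwall keeps z = p_z = 0. *)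
Lemma in_M_invariant (t0 t : R) : in_interval a b t0 -> in_interval a b t ->
  in_M (gamma t0) -> in_M (gamma t).
Proof.
  intros Ht0 Ht [Hz0 [Hpz0 Hpt0]].
  assert (Hpt : forall u, in_interval a b u -> p_theta (gamma u) = 0).
  { intros u Hu. rewrite (derive_zero_constant a b _ p_theta_conserved t0 u Ht0 Hu).
    exact Hpt0. }
  assert (Hvanish : forall t1 t2, in_interval a b t1 -> in_interval a b t2 -> t1 <= t2 ->
            (vertical_energy (gamma t1) = 0 <-> vertical_energy (gamma t2) = 0)).
  { intros t1 t2 H1 H2 H12.
    assert (Hin : forall u, t1 <= u <= t2 -> in_interval a b u)
      by (intros u Hu; now apply (in_interval_segment a b t1 t2)).
    apply (gronwall_vanishing (fun u => vertical_energy (gamma u))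
             (fun u => sz (gamma u) * p_theta (gamma u)
                       + sz (gamma u) * spz (gamma u) * vertical_rate (gamma u))
             (fun u => Rabs (vertical_rate (gamma u))) t1 t2 H12).
    - intros u Hu. exact (vertical_energy_derive u (Hin u Hu)).
    - intros u Hu. exact (vertical_rate_continuous u (Hin u Hu)).
    - intros u Hu. rewrite (Hpt u (Hin u Hu)), Rmult_0_r, Rplus_0_l, Rabs_mult.
      unfold vertical_energy.
      assert (Hzp := abs_mul_le_sum_squares (sz (gamma u)) (spz (gamma u))).
      assert (0 <= Rabs (vertical_rate (gamma u))) by apply Rabs_pos.
      split; [nra |]. rewrite Rmult_comm. now apply Rmult_le_compat_l. }
  assert (HE0 : vertical_energy (gamma t0) = 0)
    by (unfold vertical_energy; rewrite Hz0, Hpz0; ring).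
  assert (HE : vertical_energy (gamma t) = 0).
  { destruct (Rle_dec t0 t) as [Hle | Hlt].
    - now apply (Hvanish t0 t).
    - apply (Hvanish t t0); auto. lra. }
  unfold vertical_energy in HE.
  assert (Hz2 := pow2_ge_0 (sz (gamma t))). assert (Hp2 := pow2_ge_0 (spz (gamma t))).
  split; [| split]; [nra | nra | exact (Hpt t Ht)].
Qed.

End Trajectory.

Definition radial_momentum (s : state) : R := sx s * spx s + sy s * spy s.

Lemma rho_nonneg (s : state) : 0 <= rho s.
Proof. unfold rho. assert (Hx := pow2_ge_0 (sx s)). assert (Hy := pow2_ge_0 (sy s)). lra. Qed.

Lemma in_M_rho (s : state) : away_from_origin s -> in_M s ->
  0 < rho s /\ sqrt (kh_denom s) = rho s.
Proof.
  intros Haway [Hz _]. assert (Hs := kh_denom_pos s Haway).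
  assert (Hden : kh_denom s = rho s ^ 2) by (unfold kh_denom; rewrite Hz; ring).
  assert (Hr := rho_nonneg s).
  split.
  - destruct Hr as [Hr | Hr]; [exact Hr |]. rewrite Hden, <- Hr in Hs. lra.
  - rewrite Hden. now apply sqrt_pow2.
Qed.

Lemma KH_on_M (s : state) : away_from_origin s -> in_M s ->
  KH s = (spx s ^ 2 + spy s ^ 2) / 2 - / (8 * PI * rho s).
Proof.
  intros Haway HM. destruct (in_M_rho s Haway HM) as [Hr Hq].
  destruct HM as [_ [Hpz _]]. generalize PI_RGT_0; intro Hpi.
  unfold KH, PX, PY. fold (rho s) (kh_denom s). rewrite Hq, Hpz. field. lra.
Qed.

(* Lagrange's identity (x p_x + y p_y)^2 + p_theta^2 = rho |p|^2 with
   p_theta = 0 turns the energy into J^2 - 2 H rho = 1/(4 pi). *)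
Lemma radial_energy_identity (s : state) : away_from_origin s -> in_M s ->
  radial_momentum s ^ 2 - 2 * KH s * rho s = / (4 * PI).
Proof.
  intros Haway HM. rewrite (KH_on_M s Haway HM).
  destruct (in_M_rho s Haway HM) as [Hr _]. destruct HM as [_ [_ Hpt]].
  generalize PI_RGT_0; intro Hpi.
  assert (Hlagrange : radial_momentum s ^ 2 = rho s * (spx s ^ 2 + spy s ^ 2) - p_theta s ^ 2)
    by (unfold radial_momentum, rho, p_theta; ring).
  rewrite Hlagrange, Hpt. field. lra.
Qed.

Section PlanarMotion.
Variables (a b : Rbar) (gamma : R -> state) (h : R).
Hypothesis Hsol : is_KH_solution a b gamma.
Hypothesis HM : forall t, in_interval a b t -> in_M (gamma t).
Hypothesis Henergy : forall t, in_interval a b t -> KH (gamma t) = h.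

Lemma solution_away (t : R) : in_interval a b t -> away_from_origin (gamma t).
Proof. intros Ht. destruct Hsol as [_ Hham]. now destruct (Hham t Ht). Qed.

(* Virial identity on M: J' = |p|^2 - 1/(4 pi rho) = 2 H = 2 h. *)
Lemma radial_momentum_derive (t : R) : in_interval a b t ->
  is_derive (fun u => radial_momentum (gamma u)) t (2 * h).
Proof.
  intros Ht. destruct (hamilton_equations a b gamma Hsol t Ht)
    as [_ [Hx [Hy [_ [Hpx [Hpy _]]]]]].
  eapply is_derive_value; [exact (is_derive_dot _ _ _ _ t _ _ _ _ Hx Hy Hpx Hpy) |].
  assert (Haway := solution_away t Ht).
  destruct (in_M_rho _ Haway (HM t Ht)) as [Hr Hq].
  rewrite <- (Henergy t Ht), (KH_on_M _ Haway (HM t Ht)).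
  destruct (HM t Ht) as [_ [Hpz _]]. generalize PI_RGT_0; intro Hpi.
  unfold kh_coupling, PX, PY. rewrite Hq, Hpz. unfold rho. field.
  fold (rho (gamma t)). lra.
Qed.

Lemma rho_derive (t : R) : in_interval a b t ->
  is_derive (fun u => rho (gamma u)) t (2 * radial_momentum (gamma t)).
Proof.
  intros Ht. destruct (hamilton_equations a b gamma Hsol t Ht) as [_ [Hx [Hy _]]].
  eapply is_derive_value; [exact (is_derive_sum_squares _ _ t _ _ Hx Hy) |].
  destruct (HM t Ht) as [_ [Hpz _]].
  unfold radial_momentum, PX, PY. rewrite Hpz. field.
Qed.

(* rho is the quadratic 2h t^2 + 2c t + d, whose coefficients satisfy
   c^2 - 2hd = J^2 - 2h rho = 1/(4 pi). *)
Lemma rho_quadratic : exists c d, c ^ 2 - 2 * h * d = / (4 * PI) /\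
  forall t, in_interval a b t -> rho (gamma t) = 2 * h * t ^ 2 + 2 * c * t + d.
Proof.
  destruct (in_interval_inhabited a b (proj1 Hsol)) as [t0 Ht0].
  set (J := fun u => radial_momentum (gamma u)).
  set (c := J t0 - 2 * h * t0).
  assert (HJ : forall t, in_interval a b t -> J t = 2 * h * t + c).
  { intros t Ht. rewrite (derive_affine_quadratic a b J 0 (2 * h) t0 Ht0); [unfold c; ring | | exact Ht].
    intros u Hu. eapply is_derive_value; [exact (radial_momentum_derive u Hu) | ring]. }
  set (d := rho (gamma t0) - 2 * h * t0 ^ 2 - 2 * c * t0).
  exists c, d. split.
  - rewrite <- (radial_energy_identity _ (solution_away t0 Ht0) (HM t0 Ht0)).
    rewrite (Henergy t0 Ht0). fold (J t0). rewrite (HJ t0 Ht0). unfold d. ring.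
  - intros t Ht.
    rewrite (derive_affine_quadratic a b (fun u => rho (gamma u)) (2 * h) (2 * c) t0 Ht0);
      [unfold d; ring | | exact Ht].
    intros u Hu. eapply is_derive_value; [exact (rho_derive u Hu) |].
    fold (J u). rewrite (HJ u Hu). ring.
Qed.

End PlanarMotion.

(* The conic r^2 = 2h t^2 + 2c t + d in the (t, r)-plane: its determinant is
   2hd - c^2 and its discriminant 8h. *)
Definition radial_conic (h c d : R) : conic := mkConic (- 2 * h) 0 1 (- 2 * c) 0 (- d).

Lemma radial_conic_eval (h c d t r : R) :
  conic_eval (radial_conic h c d) t r = r ^ 2 - (2 * h * t ^ 2 + 2 * c * t + d).
Proof. unfold conic_eval, radial_conic; simpl. ring. Qed.

Lemma radial_conic_classification (h c d : R) :
  c ^ 2 - 2 * h * d <> 0 ->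
  (exists t r, conic_eval (radial_conic h c d) t r = 0) ->
  (h > 0 -> is_hyperbola (radial_conic h c d)) /\
  (h < 0 -> is_ellipse (radial_conic h c d)) /\
  (h = 0 -> is_parabola (radial_conic h c d)).
Proof.
  intros Hnondeg Hpoint.
  assert (Hdet : conic_det (radial_conic h c d) <> 0).
  { unfold conic_det, radial_conic; simpl. intro H0. apply Hnondeg. lra. }
  assert (Hdisc : conic_disc (radial_conic h c d) = 8 * h)
    by (unfold conic_disc, radial_conic; simpl; ring).
  unfold is_hyperbola, is_ellipse, is_parabola. rewrite Hdisc.
  repeat split; intros; auto; lra.
Qed.

Theorem mainTheorem5 :
  (forall (a b : Rbar) (gamma : R -> state),
      is_KH_solution a b gamma ->
      forall t0, in_interval a b t0 -> in_M (gamma t0) ->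
      forall t, in_interval a b t -> in_M (gamma t)) /\
  (forall (a b : Rbar) (gamma : R -> state) (h : R),
      is_KH_solution a b gamma ->
      (forall t, in_interval a b t -> in_M (gamma t)) ->
      (forall t, in_interval a b t -> KH (gamma t) = h) ->
      exists Q : conic,
        (forall t, in_interval a b t ->
           conic_eval Q t (sqrt (sx (gamma t) ^ 2 + sy (gamma t) ^ 2)) = 0) /\
        (h > 0 -> is_hyperbola Q) /\
        (h < 0 -> is_ellipse Q) /\
        (h = 0 -> is_parabola Q)).
Proof.
  split.
  - intros a b gamma Hsol t0 Ht0 HM0 t Ht.
    exact (in_M_invariant a b gamma Hsol t0 t Ht0 Ht HM0).
  - intros a b gamma h Hsol HM Henergy.
    destruct (rho_quadratic a b gamma h Hsol HM Henergy) as [c [d [Hcd Hrho]]].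
    assert (Hgraph : forall t, in_interval a b t ->
              conic_eval (radial_conic h c d) t (sqrt (rho (gamma t))) = 0).
    { intros t Ht. rewrite radial_conic_eval, pow2_sqrt by apply rho_nonneg.
      rewrite (Hrho t Ht). ring. }
    exists (radial_conic h c d). split; [exact Hgraph |].
    apply radial_conic_classification.
    + rewrite Hcd. apply Rgt_not_eq, Rinv_0_lt_compat.
      generalize PI_RGT_0. lra.
    + destruct (in_interval_inhabited a b (proj1 Hsol)) as [t Ht].
      exists t, (sqrt (rho (gamma t))). exact (Hgraph t Ht).
Qed.
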